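(* Define the integer sequence $(w_n)_{n\geq 1}$ by $w_1=1$ and, for $n\geq 1$, $$w_{n+1}=\begin{cases}\left\lfloor \sqrt{2}\,\left(w_n+1-\frac{\pi^2}{e^3}\right)\right\rfloor, & n \text{ odd},\\ \left\lfloor \sqrt{2}\,\left(w_n+\tfrac12\right)\right\rfloor, & n \text{ even}.\end{cases}$$ Then for every $n\geq 31$, $w_{2n+1}-2w_{2n-1}$ equals the $(n+1)$th binary digit of $759250125\sqrt{2}$.
   Context: $\lfloor x\rfloor$ denotes the greatest integer $\leq x$. Binary digits of a positive real number are counted from the most significant one: writing $759250125\sqrt{2}=\sum_{j\geq 1} b_j\,2^{30-(j-1)}$ with $b_j\in\{0,1\}$ and $b_1=1$ (the integer part of $759250125\sqrt{2}$ lies in $[2^{30},2^{31})$), the $j$th binary digit is $b_j$. *)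

From Stdlib Require Import Reals ZArith.
Open Scope R_scope.

(* floor x : the greatest integer <= x.  [up x] is the unique integer with
   x < IZR (up x) <= x + 1, so [up x - 1] is the floor. *)
Definition floorR (x : R) : Z := (up x - 1)%Z.

Definition wstep (n : nat) (x : Z) : Z :=
  if Nat.odd n
  then floorR (sqrt 2 * (IZR x + 1 - PI ^ 2 / exp 3))
  else floorR (sqrt 2 * (IZR x + / 2)).

(* w 1 = 1, w (n+1) = wstep n (w n) for n >= 1; w 0 is an unused junk value. *)
Fixpoint w (n : nat) : Z :=
  match n with
  | O => 0%Z
  | S O => 1%Z
  | S (S k as m) => wstep m (w m)
  end.

(* The j-th binary digit (j >= 1) of x, where x = sum_{j>=1} b_j 2^(30-(j-1)):
   b_j = floor (x / 2^(31-j)) mod 2. *)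
Definition bin_digit (x : R) (j : nat) : Z :=
  Z.modulo (floorR (x * powerRZ 2 (Z.of_nat j - 31))) 2.

Definition xi : R := 759250125 * sqrt 2.

From Stdlib Require Import Reals ZArith Lra Lia Psatz Machin List.
Open Scope R_scope.

(* Let m_k = 759250125 * 2^k, t_k = sqrt 2 * m_k and F_k = floor t_k.  Since
   sqrt 2 * F_k = 2 m_k - sqrt 2 * frac t_k, one odd step of the recursion maps
   m_k + F_k to 2 m_k + F_k (for any constant 1 - PI^2/e^3 in [3/10, 7/10]) and the
   following even step maps that to 2 m_k + floor (2 t_k) = m_(k+1) + F_(k+1).
   So w_(2k+61) = m_k + F_k as soon as it holds for k = 0, and then
   w_(2n+1) - 2 w_(2n-1) = floor (2 t_k) - 2 floor t_k is the parity of floor (2 t_k),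
   i.e. the wanted binary digit.  The first 61 terms are computed exactly with integer
   square roots after bracketing 1 - PI^2/e^3 in [101/200, 51/100]; the needed bound
   on e^3 comes from squaring 1 + h <= exp h <= 1/(1-h), h = 3/4096, twelve times. *)

Lemma floorR_unique x z : IZR z <= x < IZR z + 1 -> floorR x = z.
Proof.
  intros [Hlo Hhi]. unfold floorR.
  assert (Hup : up x = (z + 1)%Z) by (symmetry; apply tech_up; rewrite plus_IZR; lra).
  lia.
Qed.

Lemma floorR_bounds x : IZR (floorR x) <= x < IZR (floorR x) + 1.
Proof.
  unfold floorR. rewrite minus_IZR. destruct (archimed x). lra.
Qed.

Lemma floorR_le x y : x <= y -> (floorR x <= floorR y)%Z.
Proof.
  intros Hxy. destruct (floorR_bounds x), (floorR_bounds y).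
  assert (Hlt : (floorR x < floorR y + 1)%Z) by (apply lt_IZR; rewrite plus_IZR; lra).
  lia.
Qed.

Lemma floorR_add_IZR z x : floorR (IZR z + x) = (z + floorR x)%Z.
Proof.
  apply floorR_unique. destruct (floorR_bounds x). rewrite !plus_IZR. lra.
Qed.

Lemma floorR_double_mod2 x : (floorR (2 * x) mod 2 = floorR (2 * x) - 2 * floorR x)%Z.
Proof.
  destruct (floorR_bounds x), (floorR_bounds (2 * x)).
  assert (Hlo : (2 * floorR x - 1 < floorR (2 * x))%Z)
    by (apply lt_IZR; rewrite minus_IZR, mult_IZR; lra).
  assert (Hhi : (floorR (2 * x) < 2 * floorR x + 2)%Z)
    by (apply lt_IZR; rewrite plus_IZR, mult_IZR; lra).
  Z.to_euclidean_division_equations. lia.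
Qed.

Section ExpBySquaring.

Variable s : Z.
Hypothesis s_pos : (0 < s)%Z.

Definition sq_down (a : Z) : Z := (a * a / s)%Z.
Definition sq_up (b : Z) : Z := (b * b / s + 1)%Z.

Lemma exp_double_bounds x a b : (0 <= a)%Z ->
  IZR a <= IZR s * exp x <= IZR b ->
  IZR (sq_down a) <= IZR s * exp (2 * x) <= IZR (sq_up b).
Proof.
  intros Ha [Hlo Hhi]. unfold sq_down, sq_up.
  assert (Hs : 0 < IZR s) by (apply IZR_lt; exact s_pos).
  assert (Hdown : IZR s * IZR (a * a / s) <= IZR a * IZR a)
    by (rewrite <- !mult_IZR; apply IZR_le, Z.mul_div_le; exact s_pos).
  assert (Hup : IZR b * IZR b < IZR s * IZR (b * b / s + 1)).
  { rewrite <- !mult_IZR. apply IZR_lt.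
    replace (b * b / s + 1)%Z with (Z.succ (b * b / s)) by lia.
    apply Z.mul_succ_div_gt. exact s_pos. }
  apply IZR_le in Ha.
  replace (2 * x) with (x + x) by ring. rewrite exp_plus.
  split; nra.
Qed.

Lemma iter_sq_down_nonneg k a : (0 <= a)%Z -> (0 <= Nat.iter k sq_down a)%Z.
Proof.
  intros Ha. destruct k as [|k]; simpl; [exact Ha|].
  apply Z.div_pos; [nia | exact s_pos].
Qed.

Lemma exp_pow2_bounds k x a b : (0 <= a)%Z ->
  IZR a <= IZR s * exp x <= IZR b ->
  IZR (Nat.iter k sq_down a) <= IZR s * exp (2 ^ k * x) <= IZR (Nat.iter k sq_up b).
Proof.
  intros Ha Hx. induction k as [|k IH]; simpl.
  - rewrite Rmult_1_l. exact Hx.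
  - rewrite Rmult_assoc.
    apply exp_double_bounds; [apply iter_sq_down_nonneg, Ha | exact IH].
Qed.

End ExpBySquaring.

Lemma exp_mul_one_sub_le h : exp h * (1 - h) <= 1.
Proof.
  pose proof (exp_ineq1_le (- h)). pose proof (exp_pos h).
  assert (Hinv : exp h * exp (- h) = 1) by (rewrite <- exp_plus, Rplus_opp_r; apply exp_0).
  nra.
Qed.

Lemma exp_3_bounds : 20 <= exp 3 <= 503 / 25.
Proof.
  set (s := (2 ^ 40)%Z).
  assert (Hs_pos : (0 < s)%Z) by reflexivity.
  assert (Hs : IZR s = 1099511627776) by (f_equal; reflexivity).
  set (a := (s + 3 * 2 ^ 28)%Z).
  set (b := (4096 * s / 4093 + 1)%Z).
  assert (Ha : IZR a = 1099511627776 + 805306368) by (unfold a; rewrite plus_IZR, Hs; f_equal).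
  assert (Hb : 4096 * IZR s <= 4093 * IZR b)
    by (rewrite <- !mult_IZR; apply IZR_le, Z.leb_le; reflexivity).
  assert (Hinit : IZR a <= IZR s * exp (3 / 4096) <= IZR b).
  { pose proof (exp_ineq1_le (3 / 4096)). pose proof (exp_mul_one_sub_le (3 / 4096)).
    rewrite Ha. rewrite Hs in Hb |- *. split; nra. }
  pose proof (exp_pow2_bounds s Hs_pos 12 (3 / 4096) a b ltac:(unfold a; lia) Hinit) as Hexp.
  replace (2 ^ 12 * (3 / 4096)) with 3 in Hexp by (simpl; field).
  assert (Hlo : 20 * IZR s <= IZR (Nat.iter 12 (sq_down s) a))
    by (rewrite <- mult_IZR; apply IZR_le, Z.leb_le; vm_compute; reflexivity).
  assert (Hhi : 25 * IZR (Nat.iter 12 (sq_up s) b) <= 503 * IZR s)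
    by (rewrite <- !mult_IZR; apply IZR_le, Z.leb_le; vm_compute; reflexivity).
  rewrite Hs in Hlo, Hhi, Hexp. lra.
Qed.

Lemma PI_bounds : 314159 / 100000 < PI < 314160 / 100000.
Proof.
  pose proof (PI_2_3_7_ineq 2) as H. simpl in H.
  unfold tg_alt, PI_2_3_7_tg, Ratan_seq in H. simpl in H. lra.
Qed.

Lemma one_sub_PI2_div_exp3_bounds : 101 / 200 <= 1 - PI ^ 2 / exp 3 <= 51 / 100.
Proof.
  pose proof exp_3_bounds. pose proof PI_bounds.
  assert (Hq : PI ^ 2 / exp 3 * exp 3 = PI ^ 2) by (field; lra).
  assert (Hpi2 : 314159 / 100000 * (314159 / 100000) <= PI ^ 2 <= 314160 / 100000 * (314160 / 100000))
    by (simpl; split; nra).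
  split; nra.
Qed.

Lemma sqrt2_sqr : sqrt 2 * sqrt 2 = 2.
Proof. apply sqrt_sqrt. lra. Qed.

Lemma sqrt2_bounds : 7 / 5 < sqrt 2 < 10 / 7.
Proof. pose proof sqrt2_sqr. pose proof (sqrt_pos 2). split; nra. Qed.

Definition floor_sqrt2_add (x p q : Z) : Z := (Z.sqrt (2 * ((q * x + p) * (q * x + p))) / q)%Z.

Lemma floorR_sqrt2_add x p q : (0 < q)%Z -> (0 <= q * x + p)%Z ->
  floorR (sqrt 2 * (IZR x + IZR p / IZR q)) = floor_sqrt2_add x p q.
Proof.
  intros Hq HN. unfold floor_sqrt2_add.
  set (N := (q * x + p)%Z) in *. set (r := Z.sqrt (2 * (N * N))). set (d := (r / q)%Z).
  destruct (Z.sqrt_spec (2 * (N * N))) as [Hr_lo Hr_hi]; [nia|]. fold r in Hr_lo, Hr_hi.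
  assert (Hd_lo : (q * d <= r)%Z) by (apply Z.mul_div_le, Hq).
  assert (Hd_hi : (r + 1 <= q * (d + 1))%Z) by (pose proof (Z.mul_succ_div_gt r q Hq); lia).
  assert (Hr : (0 <= r)%Z) by apply Z.sqrt_nonneg.
  apply IZR_le in Hr_lo, HN, Hr, Hd_lo, Hd_hi. apply IZR_lt in Hr_hi, Hq.
  rewrite !mult_IZR in Hr_lo. rewrite mult_IZR in Hd_lo. rewrite !mult_IZR, !succ_IZR in Hr_hi.
  rewrite mult_IZR, !plus_IZR in Hd_hi.
  pose proof (sqrt_pos 2).
  assert (HsqrtN : (sqrt 2 * IZR N) * (sqrt 2 * IZR N) = 2 * (IZR N * IZR N))
    by (transitivity (sqrt 2 * sqrt 2 * (IZR N * IZR N)); [ring | rewrite sqrt2_sqr; ring]).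
  assert (Hsqrt_lo : IZR r <= sqrt 2 * IZR N)
    by (apply Rsqr_incr_0; unfold Rsqr; nra).
  assert (Hsqrt_hi : sqrt 2 * IZR N < IZR r + 1)
    by (apply Rsqr_incrst_0; unfold Rsqr; nra).
  assert (HNdef : IZR N = IZR q * IZR x + IZR p) by (unfold N; rewrite plus_IZR, mult_IZR; ring).
  replace (sqrt 2 * (IZR x + IZR p / IZR q)) with (sqrt 2 * IZR N / IZR q)
    by (rewrite HNdef; field; lra).
  apply floorR_unique. fold d.
  split.
  - apply Rmult_le_reg_l with (IZR q); [lra|].
    replace (IZR q * (sqrt 2 * IZR N / IZR q)) with (sqrt 2 * IZR N) by (field; lra). lra.
  - apply Rmult_lt_reg_l with (IZR q); [lra|].
    replace (IZR q * (sqrt 2 * IZR N / IZR q)) with (sqrt 2 * IZR N) by (field; lra). lra.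
Qed.

Lemma wstep_odd m x : Nat.odd m = true -> (0 <= x)%Z ->
  floor_sqrt2_add x 101 200 = floor_sqrt2_add x 102 200 ->
  wstep m x = floor_sqrt2_add x 101 200.
Proof.
  intros Hm Hx Heq. unfold wstep. rewrite Hm.
  pose proof one_sub_PI2_div_exp3_bounds. pose proof (sqrt_pos 2).
  rewrite <- !floorR_sqrt2_add in * by lia.
  apply Z.le_antisymm; [rewrite Heq|]; apply floorR_le, Rmult_le_compat_l; lra.
Qed.

Lemma wstep_even m x : Nat.odd m = false -> (0 <= x)%Z -> wstep m x = floor_sqrt2_add x 1 2.
Proof.
  intros Hm Hx. unfold wstep. rewrite Hm, <- floorR_sqrt2_add by lia.
  do 3 f_equal. field.
Qed.

Definition wstepZ (n : nat) (x : Z) : Z :=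
  if Nat.odd n then floor_sqrt2_add x 101 200 else floor_sqrt2_add x 1 2.

Fixpoint wZ (n : nat) : Z :=
  match n with
  | O => 0%Z
  | S O => 1%Z
  | S (S k as m) => wstepZ m (wZ m)
  end.

(* [101/200] and [102/200] bracket [1 - PI^2 / exp 3]; equal floors at both
   endpoints pin down the odd steps exactly. *)
Definition wstepZ_certified (m : nat) : bool :=
  (0 <=? wZ m)%Z &&
  (negb (Nat.odd m) || (floor_sqrt2_add (wZ m) 101 200 =? floor_sqrt2_add (wZ m) 102 200)%Z).

Lemma w_eq_wZ n : forallb wstepZ_certified (seq 1 n) = true -> w (S n) = wZ (S n).
Proof.
  induction n as [|n IH]; [reflexivity|].
  rewrite seq_S, forallb_app. simpl. intros Hcert.
  apply andb_prop in Hcert as [Hprev Hlast].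
  rewrite Bool.andb_true_r in Hlast. apply andb_prop in Hlast as [Hpos Hodd].
  apply Z.leb_le in Hpos.
  change (wstep (S n) (w (S n)) = wstepZ (S n) (wZ (S n))).
  rewrite (IH Hprev). unfold wstepZ.
  destruct (Nat.odd (S n)) eqn:Hparity.
  - apply Z.eqb_eq in Hodd. apply wstep_odd; assumption.
  - apply wstep_even; assumption.
Qed.

Definition seed (k : nat) : Z := (759250125 * 2 ^ Z.of_nat k)%Z.

Lemma seed_succ k : seed (S k) = (2 * seed k)%Z.
Proof. unfold seed. rewrite Nat2Z.inj_succ, Z.pow_succ_r by lia. ring. Qed.

Lemma w_61 : w 61 = (seed 0 + floorR (sqrt 2 * IZR (seed 0)))%Z.
Proof.
  rewrite (w_eq_wZ 60) by (vm_compute; reflexivity).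
  replace (sqrt 2 * IZR (seed 0)) with (sqrt 2 * (IZR (seed 0) + IZR 0 / IZR 1)) by (f_equal; field).
  rewrite floorR_sqrt2_add by (vm_compute; congruence).
  vm_compute. reflexivity.
Qed.

Lemma floorR_odd_step_frac phi c : 0 <= phi < 1 -> 3 / 10 <= c <= 7 / 10 ->
  floorR ((1 - sqrt 2) * phi + sqrt 2 * c) = 0%Z.
Proof.
  intros Hphi Hc. pose proof sqrt2_bounds. apply floorR_unique. split; nra.
Qed.

Lemma floorR_even_step_frac phi : 0 <= phi < 1 ->
  floorR ((2 - sqrt 2) * phi + sqrt 2 / 2) = floorR (2 * phi).
Proof.
  intros Hphi. pose proof sqrt2_bounds.
  destruct (Rlt_or_le phi (1 / 2)) as [Hhalf | Hhalf].
  - rewrite !(floorR_unique _ 0); [reflexivity | split; simpl; nra ..].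
  - rewrite !(floorR_unique _ 1); [reflexivity | split; simpl; nra ..].
Qed.

Section SqrtTwoMultiple.

Variable m : Z.

Let F := floorR (sqrt 2 * IZR m).
Let phi := sqrt 2 * IZR m - IZR F.

Lemma phi_bounds : 0 <= phi < 1.
Proof. unfold phi, F. destruct (floorR_bounds (sqrt 2 * IZR m)). lra. Qed.

Lemma floorR_sqrt2_odd_step c : 3 / 10 <= c <= 7 / 10 ->
  floorR (sqrt 2 * (IZR (m + F) + c)) = (2 * m + F)%Z.
Proof.
  intros Hc.
  replace (sqrt 2 * (IZR (m + F) + c)) with (IZR (2 * m + F) + ((1 - sqrt 2) * phi + sqrt 2 * c)).
  - rewrite floorR_add_IZR, floorR_odd_step_frac by (apply phi_bounds || exact Hc). lia.
  - unfold phi. rewrite !plus_IZR, mult_IZR.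
    transitivity (sqrt 2 * (IZR m + IZR F + c) + (2 - sqrt 2 * sqrt 2) * IZR m);
      [ring | rewrite sqrt2_sqr; ring].
Qed.

Lemma floorR_sqrt2_even_step :
  floorR (sqrt 2 * (IZR (2 * m + F) + / 2)) = (2 * m + floorR (2 * (sqrt 2 * IZR m)))%Z.
Proof.
  replace (sqrt 2 * (IZR (2 * m + F) + / 2))
    with (IZR (2 * m + 2 * F) + ((2 - sqrt 2) * phi + sqrt 2 / 2)).
  - replace (2 * (sqrt 2 * IZR m)) with (IZR (2 * F) + 2 * phi) by (unfold phi; rewrite mult_IZR; ring).
    rewrite !floorR_add_IZR, floorR_even_step_frac by apply phi_bounds. lia.
  - unfold phi. rewrite !plus_IZR, !mult_IZR.
    transitivity (sqrt 2 * (2 * IZR m + IZR F + / 2) + (2 - sqrt 2 * sqrt 2) * IZR m);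
      [field | rewrite sqrt2_sqr; field].
Qed.

End SqrtTwoMultiple.

Lemma w_two_steps j m : Nat.odd j = true ->
  w j = (m + floorR (sqrt 2 * IZR m))%Z ->
  w (S (S j)) = (2 * m + floorR (2 * (sqrt 2 * IZR m)))%Z.
Proof.
  destruct j as [|j]; [discriminate|]. intros Hodd Hw.
  change (w (S (S (S j)))) with (wstep (S (S j)) (wstep (S j) (w (S j)))).
  rewrite Hw. unfold wstep at 2. rewrite Hodd.
  pose proof one_sub_PI2_div_exp3_bounds.
  unfold Rminus. rewrite Rplus_assoc, floorR_sqrt2_odd_step by lra.
  unfold wstep. rewrite Nat.odd_succ, <- Nat.negb_odd, Hodd.
  apply floorR_sqrt2_even_step.
Qed.

Lemma odd_double_add_61 k : Nat.odd (2 * k + 61) = true.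
Proof. rewrite Nat.add_comm, Nat.odd_add_mul_2. reflexivity. Qed.

Lemma w_seed k : w (2 * k + 61) = (seed k + floorR (sqrt 2 * IZR (seed k)))%Z.
Proof.
  induction k as [|k IH]; [exact w_61|].
  replace (2 * S k + 61)%nat with (S (S (2 * k + 61))) by lia.
  rewrite (w_two_steps _ _ (odd_double_add_61 k) IH), seed_succ, mult_IZR.
  do 2 f_equal. ring.
Qed.

Lemma xi_mul_pow2 k : xi * powerRZ 2 (Z.of_nat (k + 32) - 31) = 2 * (sqrt 2 * IZR (seed k)).
Proof.
  replace (Z.of_nat (k + 32) - 31)%Z with (Z.of_nat (S k)) by lia.
  rewrite <- pow_powerRZ. unfold xi, seed. rewrite mult_IZR, <- pow_IZR. simpl. ring.
Qed.

Theorem corollary3p3 :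
  forall n : nat, (31 <= n)%nat ->
    (w (2 * n + 1) - 2 * w (2 * n - 1))%Z = bin_digit xi (n + 1).
Proof.
  intros n Hn. set (k := (n - 31)%nat).
  replace (2 * n + 1)%nat with (S (S (2 * k + 61))) by lia.
  replace (2 * n - 1)%nat with (2 * k + 61)%nat by lia.
  replace (n + 1)%nat with (k + 32)%nat by lia.
  rewrite (w_two_steps _ _ (odd_double_add_61 k) (w_seed k)), w_seed.
  unfold bin_digit. rewrite xi_mul_pow2, floorR_double_mod2. lia.
Qed.
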